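(* Consider the class $\mathcal{C}$ of third order ordinary differential equations of the form $$y'''=\frac{-3X(x,y)\,(y'')^2+P(x,y)\,y''\,(y')^2+Q(x,y)\,y''\,y'+R(x,y)\,y''+S(x,y)\,(y')^5+L(x,y)\,(y')^4+K(x,y)\,(y')^3+M(x,y)\,(y')^2+N(x,y)\,y'+T(x,y)}{Y(x,y)-X(x,y)\,y'},$$ where $X,Y,P,Q,R,S,L,K,M,N,T$ are arbitrary functions of $(x,y)$ (note that the coefficient of $(y'')^2$ in the numerator is exactly $-3$ times the function $X$ appearing in the denominator). Then $\mathcal{C}$ is invariant under point transformations: for every non-degenerate point change of variables $\tilde x=\tilde x(x,y)$, $\tilde y=\tilde y(x,y)$, every equation of $\mathcal{C}$ is transformed into an equation $\tilde y'''=g(\tilde x,\tilde y,\tilde y',\tilde y'')$ which is again of the same form (with $x,y$ replaced by $\tilde x,\tilde y$, and with some new coefficient functions $\tilde X,\tilde Y,\tilde P,\dots,\tilde T$ of $(\tilde x,\tilde y)$).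
   Context: A point transformation is a change of variables $\tilde x=\tilde x(x,y)$, $\tilde y=\tilde y(x,y)$ on the plane, assumed non-degenerate, i.e. with nonzero Jacobian determinant; derivatives $y',y'',y'''$ transform accordingly by the chain rule when $y$ is regarded as a function of $x$ and $\tilde y$ as a function of $\tilde x$. A class of equations $y'''=f(x,y,y',y'')$ with $f$ in a prescribed set of functions $\mathcal F$ is called point-invariant if, for every $f\in\mathcal F$ and every non-degenerate point transformation, the transformed equation $\tilde y'''=g(\tilde x,\tilde y,\tilde y',\tilde y'')$ has $g\in\mathcal F$. *)

From Stdlib Require Import Reals List.
From Coquelicot Require Import Coquelicot.
Open Scope R_scope.

Definition dx (F : R -> R -> R) : R -> R -> R :=
  fun x y => Derive (fun t => F t y) x.
Definition dy (F : R -> R -> R) : R -> R -> R :=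
  fun x y => Derive (fun t => F x t) y.

(* Iterated partial derivative: true = d/dx, false = d/dy. *)
Fixpoint iter_partial (ds : list bool) (F : R -> R -> R) : R -> R -> R :=
  match ds with
  | nil => F
  | d :: ds' => (if d then dx else dy) (iter_partial ds' F)
  end.

Definition smooth2 (F : R -> R -> R) : Prop :=
  forall (ds : list bool) (x y : R),
    ex_derive (fun t => iter_partial ds F t y) x /\
    ex_derive (fun t => iter_partial ds F x t) y /\
    continuous (fun z : R * R => iter_partial ds F (fst z) (snd z)) (x, y).

Definition jacobian (F G : R -> R -> R) (x y : R) : R :=
  dx F x y * dy G x y - dy F x y * dx G x y.

Definition point_transformation (F G : R -> R -> R) : Prop :=
  smooth2 F /\ smooth2 G /\
  (forall x y, jacobian F G x y <> 0) /\
  (forall x1 y1 x2 y2, F x1 y1 = F x2 y2 -> G x1 y1 = G x2 y2 ->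
                       x1 = x2 /\ y1 = y2).

(* Functions on the jet space, of (x, y, p, q) = (x, y, y', y''). *)
Definition jfun := R -> R -> R -> R -> R.

(* Total derivative d/dx along solutions of y''' = f x y y' y'':
   D h = h_x + y' h_y + y'' h_{y'} + f h_{y''}. *)
Definition Dtot (f : jfun) (h : jfun) : jfun :=
  fun x y p q =>
    Derive (fun t => h t y p q) x + p * Derive (fun t => h x t p q) y
    + q * Derive (fun t => h x y t q) p + f x y p q * Derive (fun t => h x y p t) q.

Definition lift (F : R -> R -> R) : jfun := fun x y _ _ => F x y.

(* d xtilde / dx *)
Definition lam (F : R -> R -> R) (f : jfun) : jfun := Dtot f (lift F).

(* Transformed derivatives by the chain rule: d/dxtilde = (1/lam) d/dx. *)
Definition p_tilde (F G : R -> R -> R) (f : jfun) : jfun :=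
  fun x y p q => Dtot f (lift G) x y p q / lam F f x y p q.
Definition q_tilde (F G : R -> R -> R) (f : jfun) : jfun :=
  fun x y p q => Dtot f (p_tilde F G f) x y p q / lam F f x y p q.
Definition r_tilde (F G : R -> R -> R) (f : jfun) : jfun :=
  fun x y p q => Dtot f (q_tilde F G f) x y p q / lam F f x y p q.

Record coeffs := Coeffs {
  cX : R -> R -> R; cY : R -> R -> R; cP : R -> R -> R; cQ : R -> R -> R;
  cR : R -> R -> R; cS : R -> R -> R; cL : R -> R -> R; cK : R -> R -> R;
  cM : R -> R -> R; cN : R -> R -> R; cT : R -> R -> R }.

Definition class_den (c : coeffs) (x y p : R) : R := cY c x y - cX c x y * p.

Definition class_num (c : coeffs) (x y p q : R) : R :=
  -3 * cX c x y * q ^ 2 + cP c x y * q * p ^ 2 + cQ c x y * q * p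
  + cR c x y * q + cS c x y * p ^ 5 + cL c x y * p ^ 4 + cK c x y * p ^ 3
  + cM c x y * p ^ 2 + cN c x y * p + cT c x y.

Definition class_rhs (c : coeffs) : jfun :=
  fun x y p q => class_num c x y p q / class_den c x y p.

(* Write L = F_x + p F_y, M = G_x + p G_y and J for the Jacobian.  The chain rule gives
   p~ = M/L and q~ = (J q + Phi(p))/L^3 with Phi cubic in p, so q = (L^3 q~ - Phi)/J.
   Differentiating q~ once more and substituting this q, for f in the class one finds
   (Y - X p)/L * r~ = -3 X~ q~^2 + A(p)/(J L^2) q~ + B(p)/L^5 with X~ = (F_x X + F_y Y)/J,
   A quadratic and B quintic in p: both the p-dependence of the coefficient of q~^2 and the
   cubic term of A cancel exactly because the coefficient of (y'')^2 is -3 X.  Moreover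
   (Y - X p)/L = Y~ - X~ p~, and a polynomial of degree <= n in p divided by L^n is a
   polynomial of degree <= n in p~, since p/L and 1/L are affine in p~.  Evaluating these
   coefficients at the preimage of each point under the injective map (F, G) gives the new
   equation of the class. *)

From Stdlib Require Import Reals Lia List FunctionalExtensionality ClassicalEpsilon.
From Coquelicot Require Import Coquelicot.
Import ListNotations.
Open Scope R_scope.

Fixpoint peval (a : list R) (z : R) : R :=
  match a with nil => 0 | c :: a' => c + z * peval a' z end.

Fixpoint padd (a b : list R) : list R :=
  match a, b with
  | nil, _ => b
  | _, nil => a
  | c :: a', d :: b' => (c + d) :: padd a' b'
  end.

Definition pscale (k : R) (a : list R) : list R := map (Rmult k) a.

Definition psub (a b : list R) : list R := padd a (pscale (-1) b).

Definition pshift (a : list R) : list R :=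
  match a with nil => nil | _ => 0 :: a end.

Fixpoint pmul (a b : list R) : list R :=
  match a with nil => nil | c :: a' => padd (pscale c b) (pshift (pmul a' b)) end.

Fixpoint ppow (a : list R) (n : nat) : list R :=
  match n with O => [1] | S n' => pmul a (ppow a n') end.

Fixpoint pderiv (a : list R) : list R :=
  match a with nil => nil | _ :: a' => padd a' (pshift (pderiv a')) end.

Lemma peval_padd a b z : peval (padd a b) z = peval a z + peval b z.
Proof.
  revert b; induction a as [|c a IH]; intros [|d b]; simpl; try rewrite IH; ring.
Qed.

Lemma peval_pscale k a z : peval (pscale k a) z = k * peval a z.
Proof. induction a as [|c a IH]; simpl; try rewrite IH; ring. Qed.

Lemma peval_psub a b z : peval (psub a b) z = peval a z - peval b z.
Proof. unfold psub. rewrite peval_padd, peval_pscale. ring. Qed.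

Lemma peval_pshift a z : peval (pshift a) z = z * peval a z.
Proof. destruct a; simpl; ring. Qed.

Lemma peval_pmul a b z : peval (pmul a b) z = peval a z * peval b z.
Proof.
  induction a as [|c a IH]; simpl; [ring|].
  rewrite peval_padd, peval_pscale, peval_pshift, IH. ring.
Qed.

Lemma peval_ppow a n z : peval (ppow a n) z = peval a z ^ n.
Proof. induction n as [|n IH]; simpl; [ring|]. rewrite peval_pmul, IH. ring. Qed.

#[export] Hint Rewrite peval_padd peval_psub peval_pmul peval_pscale peval_ppow : peval.

Lemma peval_firstn n a z :
  length a = S n -> nth n a 0 = 0 -> peval (firstn n a) z = peval a z.
Proof.
  revert a; induction n as [|n IH]; intros [|c a] Hlen Htop; try discriminate; simpl in *.
  - destruct a; [simpl in *; subst; ring | discriminate].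
  - rewrite IH by congruence. reflexivity.
Qed.

Lemma peval_quadratic a z :
  (length a <= 3)%nat -> peval a z = nth 0 a 0 + nth 1 a 0 * z + nth 2 a 0 * z ^ 2.
Proof. intros Ha. destruct a as [|a0 [|a1 [|a2 [|a3 a]]]]; cbn in *; try lia; ring. Qed.

Lemma peval_quintic a z :
  (length a <= 6)%nat ->
  peval a z = nth 0 a 0 + nth 1 a 0 * z + nth 2 a 0 * z ^ 2 + nth 3 a 0 * z ^ 3
              + nth 4 a 0 * z ^ 4 + nth 5 a 0 * z ^ 5.
Proof.
  intros Ha. destruct a as [|a0 [|a1 [|a2 [|a3 [|a4 [|a5 [|a6 a]]]]]]]; cbn in *; try lia; ring.
Qed.

Section Homogenization.

Variables Fx Fy Gx Gy : R.
Hypothesis HJ : Fx * Gy - Fy * Gx <> 0.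

(* For a of degree <= n, hom n a lists the coefficients in s = M/L of J^n a(p) / L^n,
   using 1/L = (Gy - Fy s)/J and p/L = (Fx s - Gx)/J. *)
Fixpoint hom (n : nat) (a : list R) : list R :=
  match a with
  | nil => nil
  | c :: a' => padd (pscale c (ppow [Gy; - Fy] n)) (pmul [- Gx; Fx] (hom (pred n) a'))
  end.

Lemma hom_spec p a n :
  Fx + p * Fy <> 0 -> (length a <= S n)%nat ->
  let s := (Gx + p * Gy) / (Fx + p * Fy) in
  peval a p / (Fx + p * Fy) ^ n = peval (hom n a) s / (Fx * Gy - Fy * Gx) ^ n.
Proof.
  intros HL Ha s.
  assert (Hv : peval [Gy; - Fy] s = (Fx * Gy - Fy * Gx) * / (Fx + p * Fy))
    by (unfold s; simpl; field; exact HL).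
  assert (Hw : peval [- Gx; Fx] s = p * (Fx * Gy - Fy * Gx) / (Fx + p * Fy))
    by (unfold s; simpl; field; exact HL).
  revert n Ha; induction a as [|c a IH]; intros n Ha; cbn [hom peval]; [unfold Rdiv; ring|].
  autorewrite with peval. rewrite Hv, Hw.
  destruct n as [|n]; cbn [length pred] in Ha |- *.
  - destruct a; cbn [length peval hom] in Ha |- *; [field; exact HL | lia].
  - assert (Hrec : peval (hom n a) s
                   = (Fx * Gy - Fy * Gx) ^ n * (peval a p / (Fx + p * Fy) ^ n)).
    { rewrite (IH n) by lia. field. apply pow_nonzero, HJ. }
    rewrite Hrec, Rpow_mult_distr, pow_inv; cbn [pow].
    field; repeat split; try apply pow_nonzero; assumption.
Qed.

End Homogenization.

(* jet n H x y lists, by powers of p, the coefficients of (dx + p dy)^n H at (x, y), the n-th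
   derivative of H along the line of slope p.  Mixed partials are kept in every order. *)
Fixpoint jet (n : nat) (H : R -> R -> R) (x y : R) : list R :=
  match n with
  | O => [H x y]
  | S n' => padd (jet n' (dx H) x y) (0 :: jet n' (dy H) x y)
  end.

Section Jets.

Variables (F G : R -> R -> R) (x y : R).

Definition Phi := psub (pmul (jet 2 G x y) (jet 1 F x y)) (pmul (jet 1 G x y) (jet 2 F x y)).

(* Psi and jac_jet are (dx + p dy) Phi and (dx + p dy) J. *)
Definition Psi := psub (pmul (jet 3 G x y) (jet 1 F x y)) (pmul (jet 1 G x y) (jet 3 F x y)).
Definition jac_jet :=
  psub (padd (pscale (dy G x y) (jet 1 (dx F) x y)) (pscale (dx F x y) (jet 1 (dy G) x y)))
       (padd (pscale (dx G x y) (jet 1 (dy F) x y)) (pscale (dy F x y) (jet 1 (dx G) x y))).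

Lemma peval_Phi p :
  peval Phi p
  = peval (jet 2 G x y) p * (dx F x y + p * dy F x y)
    - (dx G x y + p * dy G x y) * peval (jet 2 F x y) p.
Proof. unfold Phi. autorewrite with peval. cbn [jet padd peval]. ring. Qed.

End Jets.

Definition q_tilde_expr (F G : R -> R -> R) : jfun :=
  fun x y p q => (jacobian F G x y * q + peval (Phi F G x y) p) / (dx F x y + p * dy F x y) ^ 3.

Definition r_tilde_expr (F G : R -> R -> R) (f : jfun) : jfun :=
  fun x y p q =>
  let L := dx F x y + p * dy F x y in
  ((peval (jac_jet F G x y) p * q + peval (Psi F G x y) p + q * peval (pderiv (Phi F G x y)) p) * L
   - 3 * (jacobian F G x y * q + peval (Phi F G x y) p) * (peval (jet 2 F x y) p + q * dy F x y))
  / L ^ 5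
  + f x y p q * jacobian F G x y / L ^ 4.

Lemma iter_partial_app ds es H :
  iter_partial (ds ++ es) H = iter_partial ds (iter_partial es H).
Proof. induction ds as [|d ds IH]; simpl; [|rewrite IH]; reflexivity. Qed.

Lemma smooth2_dx H : smooth2 H -> smooth2 (dx H).
Proof.
  intros HH ds. change (dx H) with (iter_partial [true] H).
  rewrite <- iter_partial_app. apply HH.
Qed.

Lemma smooth2_dy H : smooth2 H -> smooth2 (dy H).
Proof.
  intros HH ds. change (dy H) with (iter_partial [false] H).
  rewrite <- iter_partial_app. apply HH.
Qed.

Lemma smooth2_ex_derive_x H x y : smooth2 H -> ex_derive (fun t => H t y) x.
Proof. intros HH. exact (proj1 (HH [] x y)). Qed.

Lemma smooth2_ex_derive_y H x y : smooth2 H -> ex_derive (fun t => H x t) y.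
Proof. intros HH. exact (proj1 (proj2 (HH [] x y))). Qed.

Lemma Derive_x H x y : Derive (fun t => H t y) x = dx H x y.
Proof. reflexivity. Qed.

Lemma Derive_y H x y : Derive (fun t => H x t) y = dy H x y.
Proof. reflexivity. Qed.

Lemma Dtot_lift f H x y p q : Dtot f (lift H) x y p q = dx H x y + p * dy H x y.
Proof. unfold Dtot, lift, dx, dy. rewrite !Derive_const. ring. Qed.

Lemma p_tilde_eq F G f :
  p_tilde F G f = fun x y p _ => (dx G x y + p * dy G x y) / (dx F x y + p * dy F x y).
Proof.
  do 4 (apply functional_extensionality; intro).
  unfold p_tilde, lam. rewrite !Dtot_lift. reflexivity.
Qed.

Lemma Derive_ext_nonzero (g h k : R -> R) v :
  continuous k v -> k v <> 0 -> (forall t, k t <> 0 -> g t = h t) -> Derive g v = Derive h v.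
Proof.
  intros Hk Hv Hgh. apply Derive_ext_loc.
  apply (filter_imp (fun t => k t <> 0)); [exact Hgh | exact (Hk _ (open_neq 0 (k v) Hv))].
Qed.

Lemma Dtot_ext_nonzero f h1 h2 (k : R -> R -> R -> R) x y p q :
  continuous (fun t => k t y p) x -> continuous (fun t => k x t p) y ->
  continuous (fun t => k x y t) p -> k x y p <> 0 ->
  (forall x y p q, k x y p <> 0 -> h1 x y p q = h2 x y p q) ->
  Dtot f h1 x y p q = Dtot f h2 x y p q.
Proof.
  intros Hx Hy Hp Hk H12. unfold Dtot.
  rewrite (Derive_ext_nonzero _ (fun t => h2 t y p q) _ x Hx Hk),
    (Derive_ext_nonzero _ (fun t => h2 x t p q) _ y Hy Hk),
    (Derive_ext_nonzero _ (fun t => h2 x y t q) _ p Hp Hk),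
    (Derive_ext (fun t => h1 x y p t) (fun t => h2 x y p t))
    by (intros; apply H12; assumption).
  reflexivity.
Qed.

Section Chain_rule.

Variables F G : R -> R -> R.
Hypotheses (HF : smooth2 F) (HG : smooth2 G).

Ltac smooth_atom :=
  lazymatch goal with
  | |- smooth2 (dx ?H) => refine (smooth2_dx H _); smooth_atom
  | |- smooth2 (dy ?H) => refine (smooth2_dy H _); smooth_atom
  | |- smooth2 _ => assumption
  end.

Ltac derive_side_conditions :=
  repeat match goal with |- _ /\ _ => split end;
  first
    [ exact I
    | refine (smooth2_ex_derive_x _ _ _ _); smooth_atom
    | refine (smooth2_ex_derive_y _ _ _ _); smooth_atom
    | repeat apply Rmult_integral_contrapositive_currified;
      first [ assumption | exact R1_neq_R0 ] ].

Ltac continuity_from_derive :=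
  apply (@ex_derive_continuous R_AbsRing R_NormedModule); auto_derive; derive_side_conditions.

(* auto_derive leaves the derivatives of the atoms dx H, dy H as Derive terms; Derive_x and
   Derive_y fold them back into dx (dx H), dy (dx H), ... so that field recognises them. *)
Ltac compute_Derive :=
  rewrite ?Derive_x, ?Derive_y;
  lazymatch goal with |- context [Derive ?g ?v] =>
    let H := fresh in
    eassert (H : is_derive g v _) by (auto_derive; [derive_side_conditions | reflexivity]);
    rewrite (is_derive_unique _ _ _ H); clear H
  end.

Lemma q_tilde_eq f x y p q :
  dx F x y + p * dy F x y <> 0 -> q_tilde F G f x y p q = q_tilde_expr F G x y p q.
Proof.
  intros HL. unfold q_tilde, lam, q_tilde_expr. rewrite Dtot_lift, p_tilde_eq. unfold Dtot.
  repeat compute_Derive.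
  unfold jacobian, Phi. cbn [peval psub padd pmul pshift pscale jet map].
  field. exact HL.
Qed.

Lemma r_tilde_eq f x y p q :
  dx F x y + p * dy F x y <> 0 -> r_tilde F G f x y p q = r_tilde_expr F G f x y p q.
Proof.
  intros HL. unfold r_tilde, lam. rewrite Dtot_lift.
  rewrite (Dtot_ext_nonzero f (q_tilde F G f) (q_tilde_expr F G)
             (fun x y p => dx F x y + p * dy F x y));
    [ | continuity_from_derive .. | exact HL | intros; apply q_tilde_eq; assumption ].
  unfold Dtot, q_tilde_expr, jacobian, Phi.
  cbn [peval psub padd pmul pshift pscale jet map].
  repeat compute_Derive.
  unfold r_tilde_expr, jac_jet, Psi, Phi, jacobian. cbv zeta.
  cbn [peval psub padd pmul pshift pscale pderiv jet map].
  field. exact HL.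
Qed.

End Chain_rule.

Section New_coefficients.

Variables (c : coeffs) (F G : R -> R -> R) (x y : R).

Local Notation Fx := (dx F x y).
Local Notation Fy := (dy F x y).
Local Notation Gx := (dx G x y).
Local Notation Gy := (dy G x y).
Local Notation J := (jacobian F G x y).
Local Notation X := (cX c x y).
Local Notation Y := (cY c x y).

(* For f in the class, (Y - X p) f = -3 X q^2 + A(p) q + B(p). *)
Definition old_den := [Y; - X].
Definition old_A := [cR c x y; cQ c x y; cP c x y].
Definition old_B := [cT c x y; cN c x y; cM c x y; cK c x y; cL c x y; cS c x y].

Definition new_X := (Fx * X + Fy * Y) / J.
Definition new_Y := (Gx * X + Gy * Y) / J.

(* Substituting q = (L^3 t - Phi)/J in (Y - X p)/L * r~ gives
   -3 new_X t^2 + new_A(p)/(J L^2) t + new_B(p)/L^5. *)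
Definition Xi := psub (pscale new_X (jet 2 G x y)) (pscale new_Y (jet 2 F x y)).
Definition new_A_raw :=
  padd (pmul (padd (jac_jet F G x y) (pderiv (Phi F G x y))) old_den)
    (padd (pscale J old_A) (padd (pscale (3 * X) (Phi F G x y)) (pscale (3 * J) Xi))).
Definition new_A := firstn 3 new_A_raw.
Definition new_B :=
  psub (padd (pscale J old_B)
          (padd (pmul (Psi F G x y) old_den) (pscale 3 (pmul (Phi F G x y) Xi))))
       (pscale (/ J) (pmul new_A (Phi F G x y))).

Definition new_P := nth 2 (hom Fx Fy Gx Gy 2 new_A) 0 / J ^ 3.
Definition new_Q := nth 1 (hom Fx Fy Gx Gy 2 new_A) 0 / J ^ 3.
Definition new_R := nth 0 (hom Fx Fy Gx Gy 2 new_A) 0 / J ^ 3.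
Definition new_S := nth 5 (hom Fx Fy Gx Gy 5 new_B) 0 / J ^ 5.
Definition new_L := nth 4 (hom Fx Fy Gx Gy 5 new_B) 0 / J ^ 5.
Definition new_K := nth 3 (hom Fx Fy Gx Gy 5 new_B) 0 / J ^ 5.
Definition new_M := nth 2 (hom Fx Fy Gx Gy 5 new_B) 0 / J ^ 5.
Definition new_N := nth 1 (hom Fx Fy Gx Gy 5 new_B) 0 / J ^ 5.
Definition new_T := nth 0 (hom Fx Fy Gx Gy 5 new_B) 0 / J ^ 5.

(* The cubic terms of Phi' (Y - X p) and 3 X Phi cancel: this is where the coefficient -3 of
   (y'')^2 in the class is used. *)
Lemma peval_new_A p : peval new_A p = peval new_A_raw p.
Proof.
  apply peval_firstn; [reflexivity|].
  unfold new_A_raw.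
  cbn [nth padd pmul pshift pscale psub pderiv jac_jet Phi Xi jet old_den old_A map].
  ring.
Qed.

Hypothesis HJ : J <> 0.

Lemma new_den_eq p :
  Fx + p * Fy <> 0 ->
  new_Y - new_X * ((Gx + p * Gy) / (Fx + p * Fy)) = (Y - X * p) / (Fx + p * Fy).
Proof. intros HL. unfold new_X, new_Y, jacobian in *. field. split; assumption. Qed.

Lemma new_A_coeffs p :
  Fx + p * Fy <> 0 ->
  let s := (Gx + p * Gy) / (Fx + p * Fy) in
  new_P * s ^ 2 + new_Q * s + new_R = peval new_A p / (J * (Fx + p * Fy) ^ 2).
Proof.
  intros HL; cbv zeta. unfold new_P, new_Q, new_R.
  pose proof (hom_spec Fx Fy Gx Gy HJ p new_A 2 HL (le_n 3)) as Hhom; cbv zeta in Hhom.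
  rewrite (peval_quadratic (hom Fx Fy Gx Gy 2 new_A)) in Hhom by exact (le_n 3).
  unfold jacobian in *.
  replace (peval new_A p / (_ * (Fx + p * Fy) ^ 2))
    with (peval new_A p / (Fx + p * Fy) ^ 2 / (Fx * Gy - Fy * Gx)) by (field; split; assumption).
  rewrite Hhom. field. split; assumption.
Qed.

Lemma new_B_coeffs p :
  Fx + p * Fy <> 0 ->
  let s := (Gx + p * Gy) / (Fx + p * Fy) in
  new_S * s ^ 5 + new_L * s ^ 4 + new_K * s ^ 3 + new_M * s ^ 2 + new_N * s + new_T
  = peval new_B p / (Fx + p * Fy) ^ 5.
Proof.
  intros HL; cbv zeta. unfold new_S, new_L, new_K, new_M, new_N, new_T.
  rewrite (hom_spec Fx Fy Gx Gy HJ p new_B 5 HL (le_n 6)).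
  rewrite (peval_quintic (hom Fx Fy Gx Gy 5 new_B)) by exact (le_n 6).
  unfold jacobian in *. field. split; assumption.
Qed.

End New_coefficients.

Definition new_coeffs (c : coeffs) (F G : R -> R -> R) : coeffs :=
  Coeffs (new_X c F G) (new_Y c F G) (new_P c F G) (new_Q c F G) (new_R c F G)
    (new_S c F G) (new_L c F G) (new_K c F G) (new_M c F G) (new_N c F G) (new_T c F G).

Lemma class_num_split c x y p q :
  class_num c x y p q
  = -3 * cX c x y * q ^ 2 + (cP c x y * p ^ 2 + cQ c x y * p + cR c x y) * q
    + (cS c x y * p ^ 5 + cL c x y * p ^ 4 + cK c x y * p ^ 3 + cM c x y * p ^ 2
       + cN c x y * p + cT c x y).
Proof. unfold class_num. ring. Qed.

Lemma r_tilde_expr_in_class c F G x y p q :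
  jacobian F G x y <> 0 -> dx F x y + p * dy F x y <> 0 -> class_den c x y p <> 0 ->
  let s := (dx G x y + p * dy G x y) / (dx F x y + p * dy F x y) in
  class_den (new_coeffs c F G) x y s <> 0 /\
  r_tilde_expr F G (class_rhs c) x y p q
  = class_rhs (new_coeffs c F G) x y s (q_tilde_expr F G x y p q).
Proof.
  intros HJ HL Hden; cbv zeta.
  assert (Hnew_den :
    class_den (new_coeffs c F G) x y ((dx G x y + p * dy G x y) / (dx F x y + p * dy F x y))
    = class_den c x y p / (dx F x y + p * dy F x y)) by (apply new_den_eq; assumption).
  split.
  - rewrite Hnew_den. unfold Rdiv.
    apply Rmult_integral_contrapositive_currified; [exact Hden | apply Rinv_neq_0_compat, HL].
  - unfold class_rhs at 2. rewrite Hnew_den, class_num_split.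
    cbn [new_coeffs cX cP cQ cR cS cL cK cM cN cT].
    rewrite new_A_coeffs, new_B_coeffs by assumption.
    unfold new_B. autorewrite with peval. rewrite peval_new_A.
    unfold new_A_raw, Xi. autorewrite with peval.
    unfold r_tilde_expr, q_tilde_expr, class_rhs, class_num, class_den, new_X, new_Y.
    rewrite !peval_Phi. cbn [peval old_den old_A old_B].
    clear Hnew_den. unfold jacobian in *.
    field. repeat split; assumption.
Qed.

(* Arbitrary off the image of (F, G). *)
Definition inverse_map (F G : R -> R -> R) (u v : R) : R * R :=
  epsilon (inhabits (0, 0)) (fun w => F (fst w) (snd w) = u /\ G (fst w) (snd w) = v).

Definition transport (F G H : R -> R -> R) : R -> R -> R :=
  fun u v => H (fst (inverse_map F G u v)) (snd (inverse_map F G u v)).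

Definition transport_coeffs (F G : R -> R -> R) (d : coeffs) : coeffs :=
  Coeffs (transport F G (cX d)) (transport F G (cY d)) (transport F G (cP d))
    (transport F G (cQ d)) (transport F G (cR d)) (transport F G (cS d))
    (transport F G (cL d)) (transport F G (cK d)) (transport F G (cM d))
    (transport F G (cN d)) (transport F G (cT d)).

Section Transport.

Variables F G : R -> R -> R.
Hypothesis Hinj :
  forall x1 y1 x2 y2, F x1 y1 = F x2 y2 -> G x1 y1 = G x2 y2 -> x1 = x2 /\ y1 = y2.

Lemma inverse_map_spec x y : inverse_map F G (F x y) (G x y) = (x, y).
Proof.
  unfold inverse_map.
  destruct (epsilon_spec (inhabits (0, 0))
              (fun w => F (fst w) (snd w) = F x y /\ G (fst w) (snd w) = G x y))
    as [HF HG]; [exists (x, y); split; reflexivity|].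
  destruct (epsilon _ _) as [x' y']. simpl in HF, HG.
  destruct (Hinj _ _ _ _ HF HG). subst. reflexivity.
Qed.

Lemma transport_spec H x y : transport F G H (F x y) (G x y) = H x y.
Proof. unfold transport. rewrite inverse_map_spec. reflexivity. Qed.

Lemma class_den_transport d x y p :
  class_den (transport_coeffs F G d) (F x y) (G x y) p = class_den d x y p.
Proof. unfold class_den. cbn [transport_coeffs cX cY]. rewrite !transport_spec. reflexivity. Qed.

Lemma class_rhs_transport d x y p q :
  class_rhs (transport_coeffs F G d) (F x y) (G x y) p q = class_rhs d x y p q.
Proof.
  unfold class_rhs, class_num. rewrite class_den_transport.
  cbn [transport_coeffs cX cP cQ cR cS cL cK cM cN cT]. rewrite !transport_spec. reflexivity.
Qed.

End Transport.

Theorem theorem1 :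
  forall (c : coeffs) (F G : R -> R -> R),
    point_transformation F G ->
    exists c' : coeffs,
      forall x y p q : R,
        lam F (class_rhs c) x y p q <> 0 ->
        class_den c x y p <> 0 ->
        class_den c' (F x y) (G x y) (p_tilde F G (class_rhs c) x y p q) <> 0 /\
        r_tilde F G (class_rhs c) x y p q =
          class_rhs c' (F x y) (G x y)
            (p_tilde F G (class_rhs c) x y p q)
            (q_tilde F G (class_rhs c) x y p q).
Proof.
  intros c F G [HF [HG [HJ Hinj]]].
  exists (transport_coeffs F G (new_coeffs c F G)).
  intros x y p q Hlam Hden.
  unfold lam in Hlam. rewrite Dtot_lift in Hlam.
  rewrite class_den_transport, class_rhs_transport by exact Hinj.
  rewrite (q_tilde_eq F G HF HG), (r_tilde_eq F G HF HG), p_tilde_eq by exact Hlam.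
  apply r_tilde_expr_in_class; auto.
Qed.
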